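(* Let $Q\in\mathbb{R}^{n\times n}$ be symmetric nonsingular with eigenvalues $\lambda_1\ge\dots\ge\lambda_{n-1}>0>\lambda_n$ and orthonormal eigenvectors $u_1,\dots,u_n$ ($Qu_i=\lambda_iu_i$), let $\mathcal{C_L}=\{x: x^TQx\le0,\ x^TQu_n\le0\}$, and let $A\in\mathbb{R}^{n\times n}$. Then $\mathcal{C_L}$ is an invariant set for the discrete system $x_{k+1}=Ax_k$ (i.e., $A\mathcal{C_L}\subseteq\mathcal{C_L}$) if and only if there exists $\mu\ge0$ such that $$A^TQA-\mu Q\preceq0,\qquad u_n^TAu_n\ge0,\qquad u_n^TAQ^{-1}A^Tu_n\le0.$$ The same conditions characterize invariance of $-\mathcal{C_L}$.
   Context: $\preceq0$ denotes negative semidefiniteness. *)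

(* Real numbers are modelled by an arbitrary real closed field. *)
From HB Require Import structures.
From mathcomp Require Import all_boot all_order all_algebra.
Set Implicit Arguments. Unset Strict Implicit. Unset Printing Implicit Defensive.
Import Order.TTheory GRing.Theory Num.Theory.
Local Open Scope ring_scope.

Definition bilin (R : rcfType) (n : nat) (x : 'cV[R]_n) (M : 'M[R]_n) (y : 'cV[R]_n) : R :=
  (x^T *m M *m y) 0 0.

Definition nsd (R : rcfType) (n : nat) (M : 'M[R]_n) : Prop :=
  M^T = M /\ forall x : 'cV[R]_n, bilin x M x <= 0.

Definition CL (R : rcfType) (n : nat) (Q : 'M[R]_n) (un : 'cV[R]_n) (x : 'cV[R]_n) : Prop :=
  bilin x Q x <= 0 /\ bilin x Q un <= 0.

Definition negCL (R : rcfType) (n : nat) (Q : 'M[R]_n) (un : 'cV[R]_n) (x : 'cV[R]_n) : Prop :=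
  CL Q un (- x).

Definition invariant_set (R : rcfType) (n : nat) (S : 'cV[R]_n -> Prop) (A : 'M[R]_n) : Prop :=
  forall x, S x -> S (A *m x).

From HB Require Import structures.
From mathcomp Require Import all_boot all_order all_algebra.
From mathcomp Require Import spectral sesquilinear.
From mathcomp.real_closed Require Import complex polyrcf.
From mathcomp Require Import ring lra.
From Stdlib Require Classical_Prop.
Import Order.TTheory GRing.Theory Num.Theory.
Set Implicit Arguments. Unset Strict Implicit. Unset Printing Implicit Defensive.
Local Open Scope ring_scope.

(* Whitening by the orthonormal eigenbasis of [Q] turns [x^T Q x] into the
   Lorentz form [|z|^2 - 2 z_n^2] and [C_L] into one nappe of the Lorentz cone.
   Invariance of [C_L] then splits into two facts.
   - [A] maps the double cone [x^T Q x <= 0] into itself; by the S-lemma for the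
     Lorentz form this is [A^T Q A - mu Q <= 0] for some [mu >= 0].
   - [A] does not swap the two nappes: [u_n] lies in [C_L], whence
     [u_n^T A u_n >= 0]; and as the cone is self-dual, [A^T u_n] pairing
     nonnegatively with [C_L] means that [Q^-1 A^T u_n] lies in the cone,
     i.e. [u_n^T A Q^-1 A^T u_n <= 0].
   The S-lemma is a Schur complement argument: with [rho] the top eigenvalue of
   [M] compressed to [e^perp], for [mu > rho] the minimum of [mu q - x^T M x]
   over [x_n = 1] is attained at an explicit point [ymin mu].  Either the
   intermediate value theorem puts some [ymin mu] on the cone, where the
   hypothesis gives the sign, or letting [mu] decrease to [rho] shows that
   [mu = rho] works.  Since [x |-> -x] exchanges [C_L] and [-C_L] and commutes
   with [A], the same conditions characterize the invariance of [-C_L]. *)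

Section Dot.
Variable R : realDomainType.

Definition dot n (a b : 'cV[R]_n) : R := (a^T *m b) 0 0.

Lemma dotE n (a b : 'cV[R]_n) : dot a b = \sum_i a i 0 * b i 0.
Proof. by rewrite /dot mxE; apply: eq_bigr => i _; rewrite mxE. Qed.

Lemma dot_mx1 n (a b : 'cV[R]_n) : a^T *m b = (dot a b)%:M.
Proof. by apply/matrixP => i j; rewrite (ord1 i) (ord1 j) [RHS]mxE eqxx mulr1n. Qed.

Lemma dotC n (a b : 'cV[R]_n) : dot a b = dot b a.
Proof. by rewrite !dotE; apply: eq_bigr => i _; rewrite mulrC. Qed.

Lemma dotDl n (a b c : 'cV[R]_n) : dot (a + b) c = dot a c + dot b c.
Proof. by rewrite !dotE -big_split; apply: eq_bigr => i _; rewrite mxE mulrDl. Qed.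

Lemma dotDr n (a b c : 'cV[R]_n) : dot c (a + b) = dot c a + dot c b.
Proof. by rewrite ![dot c _]dotC dotDl. Qed.

Lemma dotZl n k (a c : 'cV[R]_n) : dot (k *: a) c = k * dot a c.
Proof. by rewrite !dotE mulr_sumr; apply: eq_bigr => i _; rewrite mxE mulrA. Qed.

Lemma dotZr n k (a c : 'cV[R]_n) : dot c (k *: a) = k * dot c a.
Proof. by rewrite ![dot c _]dotC dotZl. Qed.

Lemma dotNl n (a c : 'cV[R]_n) : dot (- a) c = - dot a c.
Proof. by rewrite -scaleN1r dotZl mulN1r. Qed.

Lemma dotNr n (a c : 'cV[R]_n) : dot c (- a) = - dot c a.
Proof. by rewrite ![dot c _]dotC dotNl. Qed.

Lemma dotBl n (a b c : 'cV[R]_n) : dot (a - b) c = dot a c - dot b c.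
Proof. by rewrite dotDl dotNl. Qed.

Lemma dotBr n (a b c : 'cV[R]_n) : dot c (a - b) = dot c a - dot c b.
Proof. by rewrite dotDr dotNr. Qed.

Lemma dot0l n (c : 'cV[R]_n) : dot 0 c = 0.
Proof. by rewrite dotE big1 // => i _; rewrite mxE mul0r. Qed.

Lemma dot0r n (c : 'cV[R]_n) : dot c 0 = 0.
Proof. by rewrite dotC dot0l. Qed.

Lemma dot_suml n (I : finType) (F : I -> 'cV[R]_n) x :
  dot (\sum_i F i) x = \sum_i dot (F i) x.
Proof.
rewrite dotE (eq_bigr (fun j => \sum_i F i j 0 * x j 0)); last first.
  by move=> j _; rewrite summxE mulr_suml.
by rewrite exchange_big /=; apply: eq_bigr => i _; rewrite dotE.
Qed.

Lemma dot_sumr n (I : finType) (F : I -> 'cV[R]_n) x :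
  dot x (\sum_i F i) = \sum_i dot x (F i).
Proof. by rewrite dotC dot_suml; apply: eq_bigr => i _; rewrite dotC. Qed.

Lemma dot_delta n (i : 'I_n) (z : 'cV[R]_n) : dot (delta_mx i 0) z = z i 0.
Proof.
rewrite dotE (bigD1 i) //= big1 ?addr0 => [|j /negPf ji]; first by rewrite mxE !eqxx mul1r.
by rewrite mxE ji mul0r.
Qed.

Lemma dot_mulmxr n (a b : 'cV[R]_n) (M : 'M[R]_n) : dot a (M *m b) = dot (M^T *m a) b.
Proof. by rewrite /dot trmx_mul trmxK mulmxA. Qed.

Lemma dot_sym_mulmx n (a b : 'cV[R]_n) (M : 'M[R]_n) :
  M^T = M -> dot a (M *m b) = dot b (M *m a).
Proof. by move=> MT; rewrite dot_mulmxr MT dotC. Qed.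

Lemma dot_ge0 n (a : 'cV[R]_n) : 0 <= dot a a.
Proof. by rewrite dotE sumr_ge0 // => i _; rewrite -expr2 sqr_ge0. Qed.

Lemma dot_eq0 n (a : 'cV[R]_n) : dot a a = 0 -> a = 0.
Proof.
rewrite dotE => /eqP; rewrite psumr_eq0 => [|i _]; last by rewrite -expr2 sqr_ge0.
move=> /allP a0; apply/matrixP => i j; rewrite (ord1 j) mxE.
by have /= := a0 i (mem_index_enum i); rewrite -expr2 sqrf_eq0 => /eqP.
Qed.

Lemma dot_gt0 n (a : 'cV[R]_n) : a != 0 -> 0 < dot a a.
Proof.
by move=> a0; rewrite lt_def dot_ge0 andbT; apply: contra a0 => /eqP/dot_eq0 ->.
Qed.

End Dot.

Lemma bilinE (R : rcfType) n (a b : 'cV[R]_n) (M : 'M[R]_n) : bilin a M b = dot a (M *m b).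
Proof. by rewrite /bilin /dot mulmxA. Qed.

Section SymmetricMaxEigen.
Variables (R : rcfType) (N : nat) (P : 'M[R]_N.+1).
Hypothesis PT : P^T = P.
Local Notation C := (R[i]).
Local Notation f := (real_complex R).

Let PC : 'M[C]_N.+1 := map_mx f P.
Let U := spectralmx PC.
Let D := spectral_diag PC.

Let PC_herm : PC \is hermsymmx.
Proof.
apply: realsym_hermsym.
  rewrite qualifE expr0 scale1r; apply/eqP.
  by rewrite map_mx_id // /PC map_trmx PT.
by apply/mxOverP => i j; rewrite mxE /= complex_real.
Qed.

Let PC_spectral : PC = invmx U *m diag_mx D *m U.
Proof. exact/orthomx_spectralP/hermitian_normalmx/PC_herm. Qed.

Let d i := complex.Re (D 0 i).

Let D_real i : D 0 i = f (d i).
Proof.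
have /mxOverP/(_ 0 i) := hermitian_spectral_diag_real PC_herm.
by rewrite /d; case: (D 0 i) => a b; rewrite complex_real => /eqP ->.
Qed.

Let j := [arg max_(i > ord0) d i]%O.
Let rho := d j.

Let d_le_rho i : d i <= rho.
Proof. by rewrite /rho /j; case: arg_maxP => // k _; apply. Qed.

Let det_P_rho : \det (P - rho%:M) = 0.
Proof.
apply/eqP; rewrite -(fmorph_eq0 f) -det_map_mx map_mxB /= map_scalar_mx -/PC.
apply/det0P; exists (delta_mx 0 j *m U).
  apply/negP => /eqP /(congr1 (fun X => (X *m invmx U) 0 j)).
  by rewrite mul0mx mulmxK ?spectral_unit // !mxE !eqxx => /eqP; rewrite oner_eq0.
rewrite {1}PC_spectral mulmxBr !mulmxA mulmxK ?spectral_unit //.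
have -> : (delta_mx 0 j : 'rV[C]_N.+1) *m diag_mx D = f rho *: delta_mx 0 j.
  apply/matrixP => a b; rewrite mul_mx_diag !mxE (ord1 a) eqxx /=.
  by case: (b =P j) => [->|_]; rewrite /= ?mul1r ?mul0r ?mulr1 ?mulr0 // D_real.
by rewrite mul_mx_scalar -scalemxAl subrr.
Qed.

(* In the unitary coordinates [U z] the form is [\sum_i d i * |(U z)_i|^2]. *)
Let rayleigh_le (z : 'cV[R]_N.+1) : dot z (P *m z) <= rho * dot z z.
Proof.
pose Z := map_mx f z.
rewrite -lecR rmorphM /= /dot mulmxA.
have -> : f ((z^T *m P *m z) 0 0) = (Z^T *m PC *m Z) 0 0.
  by rewrite /Z map_trmx -!map_mxM [RHS]mxE.
have -> : f ((z^T *m z) 0 0) = (Z^T *m Z) 0 0.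
  by rewrite /Z map_trmx -!map_mxM [RHS]mxE.
pose y := U *m Z.
have Ey : Z^T *m invmx U = (y ^t*)%sesqui.
  have ZC g : (forall x : R, g (f x) = f x) -> map_mx g Z = Z.
    by move=> gf; apply/matrixP => a b; rewrite !mxE gf.
  have fC x : (f x)^* = f x by rewrite conj_Creal //= complex_real.
  rewrite invmx_unitary ?spectral_unitarymx // /y -[in RHS]map_trmx map_mxM (ZC _ fC).
  by rewrite trmx_mul; congr (_ *m _); rewrite map_trmx.
have -> : Z^T *m Z = (y ^t*)%sesqui *m y by rewrite -Ey /y mulmxA mulmxKV ?spectral_unit.
have -> : Z^T *m PC *m Z = (y ^t*)%sesqui *m diag_mx D *m y.
  by rewrite {1}PC_spectral -Ey /y !mulmxA.
rewrite mul_mx_diag !mxE mulr_sumr.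
apply: ler_sum => i _; rewrite !mxE D_real mulrAC [X in _ <= X]mulrC.
by apply: ler_wpM2l; [rewrite mulrC mul_conjC_ge0 | rewrite lecR d_le_rho].
Qed.

Lemma symmx_max_eigen : exists rho (k : 'cV[R]_N.+1),
  [/\ k != 0, P *m k = rho *: k & forall z, dot z (P *m z) <= rho * dot z z].
Proof.
have /det0P [v v0 Hv] := introT eqP det_P_rho.
exists rho, v^T; split; [by rewrite trmx_eq0 | | exact: rayleigh_le].
apply/eqP; rewrite -subr_eq0 -mul_scalar_mx -mulmxBl.
by rewrite -[P - _]trmxK linearB /= PT tr_scalar_mx -trmx_mul Hv trmx0.
Qed.

End SymmetricMaxEigen.

Section LorentzSLemma.
Variables (R : rcfType) (n : nat).
Local Notation e := (delta_mx ord_max 0 : 'cV[R]_n.+1).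

Definition lorentz (z : 'cV[R]_n.+1) := dot z z - 2 * dot e z ^+ 2.

Lemma dot_ee : dot e e = 1.
Proof. by rewrite dot_delta mxE !eqxx. Qed.

Definition eperp : 'M[R]_n.+1 := 1%:M - e *m e^T.

Lemma eperp_sym : eperp^T = eperp.
Proof. by rewrite /eperp linearB /= trmx1 trmx_mul trmxK. Qed.

Lemma eeT_mul (z : 'cV[R]_n.+1) : e *m e^T *m z = dot e z *: e.
Proof. by rewrite -mulmxA dot_mx1 mul_mx_scalar. Qed.

Lemma eperpE (z : 'cV[R]_n.+1) : eperp *m z = z - dot e z *: e.
Proof. by rewrite /eperp mulmxBl mul1mx eeT_mul. Qed.

Lemma dot_e_eperp (z : 'cV[R]_n.+1) : dot e (eperp *m z) = 0.
Proof. by rewrite eperpE dotBr dotZr dot_ee mulr1 subrr. Qed.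

Lemma eperp_id (z : 'cV[R]_n.+1) : dot e z = 0 -> eperp *m z = z.
Proof. by move=> ez; rewrite eperpE ez scale0r subr0. Qed.

Lemma dot_eperp (w x : 'cV[R]_n.+1) : dot e w = 0 -> dot w (eperp *m x) = dot w x.
Proof. by move=> ew; rewrite dot_mulmxr eperp_sym eperp_id. Qed.

Lemma eperp_decomp (z : 'cV[R]_n.+1) : z = eperp *m z + dot e z *: e.
Proof. by rewrite eperpE subrK. Qed.

Section Compression.
Variables (M : 'M[R]_n.+1) (c : R).
Hypothesis M_sym : M^T = M.
Hypothesis M_le0 : forall z, lorentz z <= 0 -> dot z (M *m z) <= 0.

(* [M] compressed to [e^perp], extended by [-c] on [e]; [c] is chosen so that
   [-c] lies below the top eigenvalue, whose eigenvector is then orthogonal to [e]. *)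
Definition Mc := eperp *m M *m eperp - c *: (e *m e^T).

Lemma Mc_sym : Mc^T = Mc.
Proof. by rewrite /Mc linearB /= !linearZ /= !trmx_mul trmxK eperp_sym M_sym mulmxA. Qed.

Lemma Mc_perp (w : 'cV[R]_n.+1) : dot e w = 0 -> Mc *m w = eperp *m (M *m w).
Proof.
move=> ew; rewrite /Mc mulmxBl -scalemxAl eeT_mul ew scale0r scaler0 subr0.
by rewrite -!mulmxA [eperp *m w]eperp_id.
Qed.

Lemma dot_e_Mc (z : 'cV[R]_n.+1) : dot e (Mc *m z) = - c * dot e z.
Proof.
rewrite /Mc mulmxBl -scalemxAl eeT_mul dotBr !dotZr dot_ee mulr1.
by rewrite -!mulmxA dot_e_eperp sub0r mulNr.
Qed.

Definition gap mu (z : 'cV[R]_n.+1) := mu * lorentz z - dot z (M *m z).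

Definition Me_perp := eperp *m (M *m e).
Definition Mc_shift mu : 'M[R]_n.+1 := mu%:M - Mc.
Definition vmin mu := invmx (Mc_shift mu) *m Me_perp.
Definition ymin mu := vmin mu + e.

Variables (rho : R) (k : 'cV[R]_n.+1).
Hypotheses (Mc_k : Mc *m k = rho *: k) (dot_kk : dot k k = 1) (dot_ek : dot e k = 0).
Hypotheses (Mc_rayleigh : forall z, dot z (Mc *m z) <= rho * dot z z) (c_rho : - c < rho).

Lemma Mc_shift_sym mu : (Mc_shift mu)^T = Mc_shift mu.
Proof. by rewrite /Mc_shift linearB /= tr_scalar_mx Mc_sym. Qed.

Lemma Mc_shiftE mu (z : 'cV[R]_n.+1) : Mc_shift mu *m z = mu *: z - Mc *m z.
Proof. by rewrite /Mc_shift mulmxBl mul_scalar_mx. Qed.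

Lemma Mc_shift_lower mu (z : 'cV[R]_n.+1) :
  (mu - rho) * dot z z <= dot z (Mc_shift mu *m z).
Proof. by rewrite Mc_shiftE dotBr dotZr; have := Mc_rayleigh z; lra. Qed.

Lemma Mc_shift_unit mu : rho < mu -> Mc_shift mu \in unitmx.
Proof.
move=> rho_mu; rewrite unitmxE unitfE; apply/negP => /det0P [w w0 Hw].
have Hz : Mc_shift mu *m w^T = 0 by rewrite -Mc_shift_sym -trmx_mul Hw trmx0.
have := Mc_shift_lower mu w^T; rewrite Hz dot0r.
by rewrite -trmx_eq0 in w0; have := dot_gt0 w0; nra.
Qed.

Lemma Mc_shift_vmin mu : rho < mu -> Mc_shift mu *m vmin mu = Me_perp.
Proof. by move=> rho_mu; rewrite /vmin mulKVmx ?Mc_shift_unit. Qed.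

Lemma dot_e_Mc_shift mu (z : 'cV[R]_n.+1) : dot e (Mc_shift mu *m z) = (mu + c) * dot e z.
Proof. by rewrite Mc_shiftE dotBr dotZr dot_e_Mc; ring. Qed.

Lemma dot_e_vmin mu : rho < mu -> dot e (vmin mu) = 0.
Proof.
move=> rho_mu; have := dot_e_Mc_shift mu (vmin mu).
rewrite Mc_shift_vmin // dot_e_eperp => /esym/eqP; rewrite mulf_eq0.
by case/orP => /eqP // h; have := c_rho; lra.
Qed.

Lemma gap_split mu (w : 'cV[R]_n.+1) s : dot e w = 0 ->
  gap mu (w + s *: e) =
  dot w (Mc_shift mu *m w) - 2 * s * dot w Me_perp - s ^+ 2 * (mu + dot e (M *m e)).
Proof.
move=> ew.
have Hw : dot w (Mc_shift mu *m w) = mu * dot w w - dot w (M *m w).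
  by rewrite Mc_shiftE dotBr dotZr Mc_perp // dot_eperp.
have Hb : dot w Me_perp = dot w (M *m e) by rewrite dot_eperp.
have HM : dot e (M *m w) = dot w (M *m e) by rewrite dot_sym_mulmx.
rewrite Hw Hb /gap /lorentz !dotDl !dotDr !dotZl !dotZr !mulmxDr -!scalemxAr.
rewrite !dotDr !dotZr ew HM [dot w e]dotC ew dot_ee; ring.
Qed.

(* Completing the square: over [w] orthogonal to [e], [gap mu (w + s e)] is
   minimal at [w = s * vmin mu]. *)
Lemma gap_ge_ymin mu (z : 'cV[R]_n.+1) : rho < mu ->
  dot e z ^+ 2 * gap mu (ymin mu) <= gap mu z.
Proof.
move=> rho_mu; set s := dot e z; set v := vmin mu; set w := eperp *m z.
have ew : dot e w = 0 by rewrite dot_e_eperp.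
have Hv : Mc_shift mu *m v = Me_perp by rewrite Mc_shift_vmin.
have -> : ymin mu = v + 1 *: e by rewrite scale1r.
rewrite [in X in _ <= X](eperp_decomp z) -/s -/w !gap_split ?dot_e_vmin //.
have vw : dot v (Mc_shift mu *m w) = dot w Me_perp.
  by rewrite dot_sym_mulmx ?Mc_shift_sym // Hv.
have := Mc_shift_lower mu (w - s *: v).
rewrite mulmxBr -scalemxAr Hv !dotBl !dotBr !dotZl !dotZr vw.
have := dot_ge0 (w - s *: v); rewrite !dotBl !dotBr !dotZl !dotZr [dot v w]dotC.
move=> hX; have : 0 <= (mu - rho) * dot (w - s *: v) (w - s *: v).
  by rewrite mulr_ge0 ?dot_ge0 // subr_ge0 ltW.
rewrite !dotBl !dotBr !dotZl !dotZr [dot v w]dotC; lra.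
Qed.

Lemma lorentz_ymin mu : rho < mu -> lorentz (ymin mu) = dot (vmin mu) (vmin mu) - 1.
Proof.
move=> rho_mu; rewrite /lorentz /ymin !dotDl !dotDr [dot (vmin mu) e]dotC.
by rewrite dot_e_vmin // dot_ee; ring.
Qed.

Lemma vmin_norm_le mu : rho < mu ->
  dot (vmin mu) (vmin mu) * (mu - rho) ^+ 2 <= dot Me_perp Me_perp.
Proof.
move=> rho_mu; set v := vmin mu; set d := mu - rho.
have h1 : d * dot v v <= dot v Me_perp by rewrite -(Mc_shift_vmin rho_mu) Mc_shift_lower.
have h2 := dot_ge0 (d *: v - Me_perp).
rewrite !dotBl !dotBr !dotZl !dotZr [dot Me_perp v]dotC in h2.
have d0 : 0 < d by rewrite /d subr_gt0.
nra.
Qed.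

Lemma dot_k_vmin mu : rho < mu -> dot k (vmin mu) * (mu - rho) = dot k Me_perp.
Proof.
move=> rho_mu; rewrite -(Mc_shift_vmin rho_mu) [RHS]dot_sym_mulmx ?Mc_shift_sym //.
by rewrite Mc_shiftE Mc_k -scalerBl dotZr dotC mulrC.
Qed.

Lemma dot_k_sq_le (x : 'cV[R]_n.+1) : dot k x ^+ 2 <= dot x x.
Proof.
have := dot_ge0 (x - dot k x *: k).
by rewrite !dotBl !dotBr !dotZl !dotZr dot_kk [dot x k]dotC expr2; lra.
Qed.

(* [det (Mc_shift mu)^2 * lorentz (ymin mu)] is the value at [mu] of a polynomial,
   thanks to the adjugate formula for [invmx]. *)
Definition Mc_shiftX : 'M[{poly R}]_n.+1 := 'X%:M - map_mx polyC Mc.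
Definition lorentz_ymin_poly : {poly R} :=
  let w := \adj Mc_shiftX *m map_mx polyC Me_perp in (w^T *m w) 0 0 - \det Mc_shiftX ^+ 2.

Lemma adj_Mc_shift_Me_perp mu : rho < mu ->
  \adj (Mc_shift mu) *m Me_perp = \det (Mc_shift mu) *: vmin mu.
Proof.
move=> rho_mu; have hu := Mc_shift_unit rho_mu.
rewrite -[LHS](mulKmx hu) -[RHS](mulKmx hu); congr (_ *m _).
by rewrite mulmxA mul_mx_adj mul_scalar_mx -scalemxAr Mc_shift_vmin.
Qed.

Lemma horner_lorentz_ymin_poly mu : rho < mu ->
  lorentz_ymin_poly.[mu] = \det (Mc_shift mu) ^+ 2 * lorentz (ymin mu).
Proof.
move=> rho_mu; rewrite -horner_evalE /lorentz_ymin_poly rmorphB rmorphXn /=.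
have Hs : map_mx (horner_eval mu) Mc_shiftX = Mc_shift mu.
  rewrite /Mc_shiftX /Mc_shift map_mxB /= map_scalar_mx /= horner_evalE hornerX.
  by congr (_ - _); apply/matrixP => i j; rewrite !mxE /= horner_evalE hornerC.
have Hb : map_mx (horner_eval mu) (map_mx polyC Me_perp) = Me_perp.
  by apply/matrixP => i j; rewrite !mxE /= horner_evalE hornerC.
have -> (X : 'M[{poly R}]_1) : horner_eval mu (X 0 0) = map_mx (horner_eval mu) X 0 0.
  by rewrite mxE.
rewrite map_mxM -map_trmx map_mxM map_mx_adj Hs Hb.
rewrite -det_map_mx Hs -/(dot _ _) adj_Mc_shift_Me_perp // dotZl dotZr lorentz_ymin //; ring.
Qed.

Lemma lorentz_ymin_lt0_far mu : rho < mu -> lorentz (ymin (mu + dot Me_perp Me_perp + 1)) < 0.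
Proof.
move=> rho_mu; set mu' := mu + dot Me_perp Me_perp + 1.
have bb0 := dot_ge0 Me_perp; have rho_mu' : rho < mu' by rewrite /mu'; lra.
rewrite lorentz_ymin //; have := vmin_norm_le rho_mu'.
have := dot_ge0 (vmin mu'); set x := dot (vmin mu') _.
have : (dot Me_perp Me_perp + 1) ^+ 2 <= (mu' - rho) ^+ 2.
  by rewrite ler_pXn2r // ?nnegrE /mu'; lra.
nra.
Qed.

Lemma lorentz_ymin_root mu1 : rho < mu1 -> 0 <= lorentz (ymin mu1) ->
  exists2 mu0, rho < mu0 & lorentz (ymin mu0) = 0.
Proof.
move=> rho_mu1 q1; set mu2 := mu1 + dot Me_perp Me_perp + 1.
have bb0 := dot_ge0 Me_perp; have rho_mu2 : rho < mu2 by rewrite /mu2; lra.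
have q2 := lorentz_ymin_lt0_far rho_mu1; rewrite -/mu2 in q2.
have det_gt0 mu : rho < mu -> 0 < \det (Mc_shift mu) ^+ 2.
  move=> rho_mu; rewrite exprn_even_gt0 //=.
  by have := Mc_shift_unit rho_mu; rewrite unitmxE unitfE.
have [||mu0 /andP [m1 m2] /rootP] := @poly_ivt R (- lorentz_ymin_poly) mu1 mu2.
- by rewrite /mu2; lra.
- rewrite !hornerN !horner_lorentz_ymin_poly // oppr_le0 oppr_ge0.
  by have := det_gt0 _ rho_mu1; have := det_gt0 _ rho_mu2; move=> ? ?; apply/andP; split; nra.
have rho_mu0 : rho < mu0 by lra.
rewrite hornerN horner_lorentz_ymin_poly // => /eqP; rewrite oppr_eq0 mulf_eq0.
case/orP => /eqP; last by exists mu0.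
by move/eqP; rewrite (negPf (lt0r_neq0 (det_gt0 _ rho_mu0))).
Qed.

Lemma gap_ge0_from_ymin mu : rho < mu -> 0 <= gap mu (ymin mu) -> forall z, 0 <= gap mu z.
Proof.
by move=> rho_mu g0 z; apply: le_trans (gap_ge_ymin z rho_mu); rewrite mulr_ge0 ?sqr_ge0.
Qed.

Lemma dot_M_k (x : 'cV[R]_n.+1) : dot e x = 0 -> dot x (M *m k) = rho * dot x k.
Proof. by move=> ex; rewrite -(dot_eperp _ ex) -Mc_perp // Mc_k dotZr. Qed.

(* When [k] is orthogonal to [Me_perp], moving [ymin mu] along [k] reaches the cone
   boundary, where [M_le0] applies. *)
Lemma gap_ymin_ge mu : rho < mu -> dot k Me_perp = 0 -> lorentz (ymin mu) < 0 ->
  - (mu - rho) <= gap mu (ymin mu).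
Proof.
move=> rho_mu kb qn.
have kv0 : dot k (vmin mu) = 0.
  have := dot_k_vmin rho_mu; rewrite kb => /eqP; rewrite mulf_eq0.
  by case/orP => /eqP // h0; lra.
have qy := lorentz_ymin rho_mu.
set y := ymin mu in qn qy *; set t := Num.sqrt (- lorentz y).
have t2 : t ^+ 2 = - lorentz y by rewrite sqr_sqrtr // oppr_ge0 ltW.
have yk : dot y k = 0 by rewrite /y /ymin dotDl dot_ek [dot _ k]dotC kv0 addr0.
have Myk : dot y (M *m k) = 0.
  rewrite /y /ymin dotDl dot_M_k ?dot_e_vmin // [dot _ k]dotC kv0 mulr0 add0r.
  by rewrite dot_sym_mulmx // -(dot_eperp _ dot_ek).
have Mkk : dot k (M *m k) = rho by rewrite dot_M_k // dot_kk mulr1.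
clearbody y t; pose z := y + t *: k.
have qz : lorentz z = 0.
  move: t2; rewrite /z /lorentz !dotDl !dotDr !dotZl !dotZr dot_ek yk [dot k y]dotC yk.
  by rewrite dot_kk; lra.
have Mz : dot z (M *m z) = dot y (M *m y) + t ^+ 2 * rho.
  rewrite /z mulmxDr -scalemxAr !dotDl !dotDr !dotZl !dotZr Myk Mkk.
  by rewrite [dot k (M *m y)]dot_sym_mulmx // Myk; ring.
have := M_le0 (z := z); rewrite qz lexx Mz => /(_ isT) hz.
by rewrite /gap; have := dot_ge0 (vmin mu); nra.
Qed.

Section AlwaysInside.
Hypothesis ymin_inside : forall mu, rho < mu -> lorentz (ymin mu) < 0.

Lemma dot_k_Me_perp_eq0 : dot k Me_perp = 0.
Proof.
apply/eqP/negP => /negP kb; set mu := rho + `|dot k Me_perp|.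
have rho_mu : rho < mu by rewrite ltrDl normr_gt0.
have q := ymin_inside rho_mu; rewrite lorentz_ymin // in q.
have le_a := dot_k_sq_le (vmin mu).
have := dot_k_vmin rho_mu; rewrite [mu - rho]addrC addKr.
move: le_a; set a := dot k (vmin mu) => le_a ha.
have : a ^+ 2 * `|dot k Me_perp| ^+ 2 = dot k Me_perp ^+ 2 by rewrite -exprMn ha.
rewrite real_normK ?num_real // => hh.
have kb2 : 0 < dot k Me_perp ^+ 2 by rewrite exprn_even_gt0.
have : a ^+ 2 = 1 by apply: (mulIf (lt0r_neq0 kb2)); rewrite mul1r.
lra.
Qed.

(* Let [mu] decrease to [rho] in [gap_ymin_ge]. *)
Lemma gap_rho_ge0 z : 0 <= gap rho z.
Proof.
rewrite leNgt; apply/negP => gz; set X := gap rho z in gz.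
set D := `|dot z z - dot e z ^+ 2|.
have D0 : 0 <= D by apply: normr_ge0.
set eps := - X / (2 * (D + 1)).
have eps0 : 0 < eps by rewrite divr_gt0 //; lra.
have heps : eps * (2 * (D + 1)) = - X by rewrite /eps mulfVK //; lra.
have rho_mu : rho < rho + eps by lra.
have := gap_ymin_ge rho_mu dot_k_Me_perp_eq0 (ymin_inside rho_mu).
rewrite [rho + eps - rho]addrC addKr => hb.
have hsq := gap_ge_ymin z rho_mu.
have hz : gap (rho + eps) z = X + eps * lorentz z by rewrite /X /gap; ring.
rewrite hz in hsq.
have hq : lorentz z = (dot z z - dot e z ^+ 2) - dot e z ^+ 2 by rewrite /lorentz; ring.
have hD : dot z z - dot e z ^+ 2 <= D by apply: ler_norm.
have := sqr_ge0 (dot e z); nra.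
Qed.

End AlwaysInside.

Lemma exists_gap_ge0 : exists mu, forall z, 0 <= gap mu z.
Proof.
case: (Classical_Prop.classic (exists2 mu, rho < mu & 0 <= lorentz (ymin mu))).
  move=> [mu1 rho_mu1 q1]; have [mu0 rho_mu0 q0] := lorentz_ymin_root rho_mu1 q1.
  exists mu0; apply: gap_ge0_from_ymin => //.
  by rewrite /gap q0 mulr0 sub0r oppr_ge0 M_le0 ?q0.
move=> ymin_inside; exists rho; apply: gap_rho_ge0 => mu rho_mu.
by rewrite ltNge; apply/negP => q; apply: ymin_inside; exists mu.
Qed.

End Compression.

End LorentzSLemma.

Lemma lorentz_le0_dim1 (R : rcfType) (z : 'cV[R]_1) : lorentz z <= 0.
Proof.
rewrite /lorentz dotE big_ord1 (_ : ord_max = 0) ?dot_delta; last exact: val_inj.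
by rewrite -expr2; have := sqr_ge0 (z 0 0); lra.
Qed.

Section SLemma.
Variables (R : rcfType) (n : nat) (M : 'M[R]_n.+1).
Hypotheses (M_sym : M^T = M) (M_le0 : forall z, lorentz z <= 0 -> dot z (M *m z) <= 0).

Lemma exists_Mc_eigen_perp : n != 0%N -> exists c rho (k : 'cV[R]_n.+1),
  [/\ Mc M c *m k = rho *: k, dot k k = 1, dot (delta_mx ord_max 0) k = 0,
      forall z, dot z (Mc M c *m z) <= rho * dot z z & - c < rho].
Proof.
case: n M M_sym => [//|n'] M' M'_sym _; set e := delta_mx ord_max 0.
pose w : 'cV[R]_n'.+2 := delta_mx 0 0.
have ew : dot e w = 0 by rewrite dot_delta mxE.
have ww : dot w w = 1 by rewrite dot_delta mxE !eqxx.
pose c := 1 - dot w (M' *m w).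
have [rho [k0 [k00 Mk0 rayleigh]]] := symmx_max_eigen (Mc_sym c M'_sym).
have c_rho : - c < rho.
  by have := rayleigh w; rewrite ww mulr1 Mc_perp // dot_eperp // /c; lra.
have ek0 : dot e k0 = 0.
  have := dot_e_Mc M' c k0; rewrite Mk0 dotZr => /eqP; rewrite -subr_eq0 -mulrBl.
  by rewrite mulf_eq0 => /orP [/eqP h|/eqP //]; lra.
pose k := (Num.sqrt (dot k0 k0))^-1 *: k0.
have k0_gt0 := dot_gt0 k00.
exists c, rho, k; split => //.
- by rewrite -scalemxAr Mk0 !scalerA mulrC.
- rewrite dotZl dotZr mulrA -expr2 exprVn sqr_sqrtr ?ltW //.
  by rewrite mulVf // lt0r_neq0.
- by rewrite dotZr ek0 mulr0.
Qed.

Lemma lorentz_S_lemma :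
  exists2 mu, 0 <= mu & forall z, dot z (M *m z) <= mu * lorentz z.
Proof.
have [mu Hmu] : exists mu, forall z, dot z (M *m z) <= mu * lorentz z.
  have [n0|n0] := eqVneq n 0%N.
    exists 0 => z; rewrite mul0r M_le0 //; move: z; rewrite n0.
    exact: lorentz_le0_dim1.
  have [c [rho [k [Mk kk ek rayleigh c_rho]]]] := exists_Mc_eigen_perp n0.
  have [mu gap_ge0] := exists_gap_ge0 M_sym M_le0 Mk kk ek rayleigh c_rho.
  by exists mu => z; have := gap_ge0 z; rewrite /gap; lra.
have [mu0|mu_lt0] := lerP 0 mu; first by exists mu.
exists 0 => // z; rewrite mul0r.
have [qz|qz] := lerP (lorentz z) 0; first exact: M_le0.
by have := Hmu z; nra.
Qed.

End SLemma.

Section QuadraticCone.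
Variables (R : rcfType) (n : nat) (Q : 'M[R]_n.+1) (lam : 'I_n.+1 -> R)
  (u : 'I_n.+1 -> 'cV[R]_n.+1).
Hypotheses (Q_sym : Q^T = Q) (lam_gt0 : forall i, i != ord_max -> 0 < lam i)
  (lam_max_lt0 : lam ord_max < 0)
  (u_orthonormal : forall i j, (u i)^T *m u j = (i == j)%:R%:M)
  (Q_u : forall i, Q *m u i = lam i *: u i).

Local Notation un := (u ord_max).
Local Notation qf x := (dot x (Q *m x)).
Local Notation lam_n := (lam ord_max).

Lemma dot_u i j : dot (u i) (u j) = (i == j)%:R.
Proof. by rewrite /dot u_orthonormal mxE eqxx mulr1n. Qed.

Lemma lam_neq0 i : lam i != 0.
Proof.
have [->|/lam_gt0 h] := eqVneq i ord_max; first exact: ltr0_neq0.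
exact: lt0r_neq0.
Qed.

Definition sqrt_abs_lam i := Num.sqrt `|lam i|.

Lemma sqrt_abs_lam_gt0 i : 0 < sqrt_abs_lam i.
Proof. by rewrite sqrtr_gt0 normr_gt0 lam_neq0. Qed.

Lemma sqrt_abs_lam_neq0 i : sqrt_abs_lam i != 0.
Proof. exact/lt0r_neq0/sqrt_abs_lam_gt0. Qed.

Lemma sqr_sqrt_abs_lam i : sqrt_abs_lam i ^+ 2 = `|lam i|.
Proof. by rewrite sqr_sqrtr. Qed.

(* Columns [u j / sqrt |lam j|]: a congruence taking [Q] to the Lorentz form. *)
Definition whiten : 'M[R]_n.+1 := \matrix_(a, j) (u j a 0 / sqrt_abs_lam j).
Definition unwhiten : 'M[R]_n.+1 := \matrix_(j, a) (sqrt_abs_lam j * u j a 0).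

Lemma whitenK (x : 'cV[R]_n.+1) : whiten *m (unwhiten *m x) = x.
Proof.
pose U : 'M[R]_n.+1 := \matrix_(a, j) u j a 0.
have UTU : U^T *m U = 1%:M.
  apply/matrixP => i j; rewrite !mxE -dot_u dotE; apply: eq_bigr => a _.
  by rewrite !mxE.
rewrite mulmxA -[X in _ = X]mul1mx; congr (_ *m _); rewrite -(mulmx1C UTU).
apply/matrixP => a b; rewrite !mxE; apply: eq_bigr => j _; rewrite !mxE.
by field; apply: sqrt_abs_lam_neq0.
Qed.

Lemma whitenE (z : 'cV[R]_n.+1) : whiten *m z = \sum_j (z j 0 / sqrt_abs_lam j) *: u j.
Proof.
apply/matrixP => a b; rewrite (ord1 b) summxE !mxE; apply: eq_bigr => j _.
by rewrite !mxE; ring.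
Qed.

Lemma dot_u_comb (a b : 'I_n.+1 -> R) :
  dot (\sum_j a j *: u j) (\sum_j b j *: u j) = \sum_j a j * b j.
Proof.
rewrite dot_suml; apply: eq_bigr => i _; rewrite dot_sumr (bigD1 i) //= big1.
  by rewrite dotZl dotZr dot_u eqxx mulr1 addr0 mulrC.
by move=> j ji; rewrite dotZl dotZr dot_u eq_sym (negPf ji) !mulr0.
Qed.

Lemma Q_u_comb (a : 'I_n.+1 -> R) :
  Q *m (\sum_j a j *: u j) = \sum_j (a j * lam j) *: u j.
Proof. by rewrite mulmx_sumr; apply: eq_bigr => j _; rewrite -scalemxAr Q_u scalerA. Qed.

Lemma Qform_whiten (z : 'cV[R]_n.+1) : qf (whiten *m z) = lorentz z.
Proof.
rewrite whitenE Q_u_comb dot_u_comb /lorentz dot_delta dotE.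
rewrite (bigD1 ord_max) //= [X in _ = X - _](bigD1 ord_max) //=.
have term (i : 'I_n.+1) (s : R) : lam i = s * sqrt_abs_lam i ^+ 2 ->
    z i 0 / sqrt_abs_lam i * (z i 0 / sqrt_abs_lam i * lam i) = s * z i 0 ^+ 2.
  by move=> ->; field; apply: sqrt_abs_lam_neq0.
have lam_max : lam ord_max = -1 * sqrt_abs_lam ord_max ^+ 2.
  by rewrite sqr_sqrt_abs_lam ltr0_norm // mulN1r opprK.
have lam_pos i : i != ord_max -> lam i = 1 * sqrt_abs_lam i ^+ 2.
  by move=> /lam_gt0 i_gt0; rewrite sqr_sqrt_abs_lam gtr0_norm ?mul1r.
rewrite (term _ _ lam_max) (eq_bigr (fun i => z i 0 * z i 0)).
  by rewrite expr2; ring.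
by move=> i /lam_pos /term ->; rewrite mul1r expr2.
Qed.

Lemma dot_un_whiten (z : 'cV[R]_n.+1) :
  dot un (whiten *m z) = z ord_max 0 / sqrt_abs_lam ord_max.
Proof.
rewrite whitenE dot_sumr (bigD1 ord_max) //= big1.
  by rewrite dotZr dot_u eqxx mulr1 addr0.
by move=> j ji; rewrite dotZr dot_u eq_sym (negPf ji) mulr0.
Qed.

Lemma Qform_gt0_un_perp (x : 'cV[R]_n.+1) : dot x un = 0 -> x != 0 -> 0 < qf x.
Proof.
rewrite -(whitenK x); set z := unwhiten *m x => xun x0.
have zn : z ord_max 0 = 0.
  move: xun; rewrite dotC dot_un_whiten => /eqP.
  by rewrite mulf_eq0 invr_eq0 (negPf (sqrt_abs_lam_neq0 _)) orbF => /eqP.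
rewrite Qform_whiten /lorentz dot_delta zn expr0n /= mulr0 subr0 dot_gt0 //.
by apply: contraNneq x0 => ->; rewrite mulmx0.
Qed.

Lemma Qform_ge0_un_perp (x : 'cV[R]_n.+1) : dot x un = 0 -> 0 <= qf x.
Proof.
have [->|x0] := eqVneq x 0; first by rewrite mulmx0 dot0r.
by move=> xun; rewrite ltW // Qform_gt0_un_perp.
Qed.

Lemma un_perp_Qform_le0 (x : 'cV[R]_n.+1) : qf x <= 0 -> dot x un = 0 -> x = 0.
Proof.
move=> qx xun; apply/eqP; apply: contraTT qx => x0.
by rewrite -ltNge Qform_gt0_un_perp.
Qed.

Lemma Q_un (x : 'cV[R]_n.+1) : dot x (Q *m un) = lam_n * dot x un.
Proof. by rewrite Q_u dotZr. Qed.

Lemma Qform_sym (x z : 'cV[R]_n.+1) : dot z (Q *m x) = dot x (Q *m z).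
Proof. exact: dot_sym_mulmx. Qed.

Lemma CLE (x : 'cV[R]_n.+1) : CL Q un x <-> qf x <= 0 /\ 0 <= dot x un.
Proof. by rewrite /CL !bilinE Q_un nmulr_rle0. Qed.

(* Reverse Cauchy-Schwarz: subtracting from [x] the multiple of [z] that kills
   its [un] component leaves a vector of nonnegative form. *)
Lemma Qcone_Qform_le0 (x z : 'cV[R]_n.+1) : qf x <= 0 -> 0 <= dot x un ->
  qf z <= 0 -> 0 <= dot z un -> dot x (Q *m z) <= 0.
Proof.
move=> qx xun qz zun.
have [z0|z0] := eqVneq (dot z un) 0.
  by rewrite (un_perp_Qform_le0 qz z0) mulmx0 dot0r.
have [x0|x0] := eqVneq (dot x un) 0.
  by rewrite (un_perp_Qform_le0 qx x0) dot0l.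
have zun_gt0 : 0 < dot z un by rewrite lt_def z0 zun.
have t_gt0 : 0 < dot x un / dot z un by rewrite divr_gt0 // lt_def x0 xun.
set t := dot x un / dot z un in t_gt0.
have : dot (x - t *: z) un = 0 by rewrite dotBl dotZl /t divfK ?subrr.
move=> /Qform_ge0_un_perp; rewrite mulmxBr -scalemxAr !dotBl !dotBr !dotZl !dotZr.
rewrite [dot z (Q *m x)]Qform_sym => h.
have tqz : t * (t * qf z) <= 0 by rewrite pmulr_rle0 // pmulr_rle0.
have : 2 * t * dot x (Q *m z) <= 0 by lra.
by rewrite pmulr_rle0 // mulr_gt0.
Qed.

(* The cone is self-dual: test [y] against the boundary point [b un - y'],
   where [y'] is the component of [y] orthogonal to [un]. *)
Lemma Qcone_self_dual (y : 'cV[R]_n.+1) :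
  (forall x, qf x <= 0 -> 0 <= dot x un -> 0 <= dot x (Q *m y)) -> qf y <= 0.
Proof.
move=> y_dual; set g := dot y un.
pose y' := y - g *: un.
have y'un : dot y' un = 0 by rewrite dotBl dotZl dot_u eqxx mulr1 subrr.
have Ey : y = y' + g *: un by rewrite subrK.
clearbody y'.
have Qy'un : dot y' (Q *m un) = 0 by rewrite Q_un y'un mulr0.
have Qun_y' : dot un (Q *m y') = 0 by rewrite Qform_sym.
have a0 := Qform_ge0_un_perp y'un; set a := qf y' in a0.
have unun : dot un un = 1 by rewrite dot_u eqxx.
have qy : qf y = a + lam_n * g ^+ 2.
  rewrite Ey mulmxDr -scalemxAr !dotDl !dotDr !dotZl !dotZr Qy'un Qun_y' Q_un unun.
  by rewrite /a; ring.
set b := Num.sqrt (a / - lam_n).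
have b0 : 0 <= b by apply: sqrtr_ge0.
have b2 : b ^+ 2 * - lam_n = a.
  rewrite sqr_sqrtr ?divfK ?oppr_eq0 ?ltr0_neq0 //.
  by rewrite divr_ge0 // oppr_ge0 ltW.
pose x := - y' + b *: un.
have qx : qf x = 0.
  rewrite /x mulmxDr mulmxN -scalemxAr !dotDl !dotDr !dotNl !dotNr !dotZl !dotZr.
  by rewrite Qy'un Qun_y' Q_un unun -/a; lra.
have xun : dot x un = b by rewrite /x dotDl dotNl y'un dotZl unun oppr0 add0r mulr1.
have := y_dual x; rewrite qx lexx xun => /(_ isT b0).
rewrite {1}Ey /x mulmxDr -scalemxAr !dotDl !dotNl !dotZl !dotDr !dotZr.
rewrite Qy'un Qun_y' Q_un unun -/a mulr0 mulr1 addr0 add0r => h.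
have : a ^+ 2 <= (b * lam_n * g) ^+ 2 by rewrite ler_pXn2r ?nnegrE //; lra.
have -> : (b * lam_n * g) ^+ 2 = a * (- lam_n) * g ^+ 2 by rewrite -b2; ring.
move=> key; rewrite qy.
have [a_eq0|a_neq0] := eqVneq a 0.
  by rewrite a_eq0 add0r nmulr_rle0 // sqr_ge0.
have a_gt0 : 0 < a by rewrite lt_def a_neq0.
by rewrite -(pmulr_rle0 _ a_gt0); nra.
Qed.

Lemma Qform_opp (x : 'cV[R]_n.+1) : qf (- x) = qf x.
Proof. by rewrite mulmxN dotNl dotNr opprK. Qed.

Section Invariance.
Variable A : 'M[R]_n.+1.
Hypothesis Q_unit : Q \in unitmx.

Local Notation ydual := (invmx Q *m (A^T *m un)).

Definition invariance_conditions := exists mu : R, 0 <= mu /\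
  nsd (A^T *m Q *m A - mu *: Q) /\ 0 <= bilin un A un /\
  bilin un (A *m invmx Q *m A^T) un <= 0.

Lemma Qform_mulmx (x : 'cV[R]_n.+1) : dot x ((A^T *m Q *m A) *m x) = qf (A *m x).
Proof. by rewrite -!mulmxA dot_mulmxr trmxK. Qed.

Lemma nsdE mu : nsd (A^T *m Q *m A - mu *: Q) <-> forall x, qf (A *m x) <= mu * qf x.
Proof.
have sym : (A^T *m Q *m A - mu *: Q)^T = A^T *m Q *m A - mu *: Q.
  by rewrite linearB /= linearZ /= !trmx_mul trmxK Q_sym mulmxA.
have formE x : bilin x (A^T *m Q *m A - mu *: Q) x = qf (A *m x) - mu * qf x.
  by rewrite bilinE mulmxBl -scalemxAl dotBr dotZr Qform_mulmx.
split => [[_ le0] x | le0]; first by have := le0 x; rewrite formE; lra.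
by split => // x; rewrite formE; have := le0 x; lra.
Qed.

Lemma bilin_dual : bilin un (A *m invmx Q *m A^T) un = qf ydual.
Proof. by rewrite bilinE mulKVmx // -!mulmxA dot_mulmxr dotC. Qed.

Lemma dot_Q_ydual (x : 'cV[R]_n.+1) : dot x (Q *m ydual) = dot (A *m x) un.
Proof. by rewrite mulKVmx // dot_mulmxr trmxK. Qed.

Section Necessity.
Hypothesis A_inv : invariant_set (CL Q un) A.

Lemma invariant_CLE (x : 'cV[R]_n.+1) : qf x <= 0 -> 0 <= dot x un ->
  qf (A *m x) <= 0 /\ 0 <= dot (A *m x) un.
Proof. by move=> qx xun; apply/CLE/A_inv/CLE. Qed.

Lemma invariant_Qcone (x : 'cV[R]_n.+1) : qf x <= 0 -> qf (A *m x) <= 0.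
Proof.
move=> qx; have [xun|xun] := lerP 0 (dot x un); first by case: (invariant_CLE qx xun).
rewrite -Qform_opp -mulmxN; apply: (proj1 (invariant_CLE _ _)); rewrite ?Qform_opp //.
by rewrite dotNl oppr_ge0 ltW.
Qed.

(* Pull the form [x |-> qf (A x)] back to Lorentz coordinates and apply the S-lemma. *)
Lemma invariant_nsd : exists2 mu, 0 <= mu & nsd (A^T *m Q *m A - mu *: Q).
Proof.
pose M := whiten^T *m (A^T *m Q *m A) *m whiten.
have M_sym : M^T = M by rewrite /M !trmx_mul !trmxK Q_sym !mulmxA.
have ME z : dot z (M *m z) = qf (A *m (whiten *m z)).
  by rewrite /M -!mulmxA dot_mulmxr trmxK -Qform_mulmx !mulmxA.
have M_le0 z : lorentz z <= 0 -> dot z (M *m z) <= 0.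
  by rewrite ME -Qform_whiten; apply: invariant_Qcone.
have [mu mu0 Hmu] := lorentz_S_lemma M_sym M_le0.
exists mu => //; apply/nsdE => x.
by rewrite -(whitenK x) -ME Qform_whiten; apply: Hmu.
Qed.

Lemma invariant_un_A_un : 0 <= bilin un A un.
Proof.
have unun : dot un un = 1 by rewrite dot_u eqxx.
have qun : qf un <= 0 by rewrite Q_un unun mulr1 ltW.
have [_] : qf (A *m un) <= 0 /\ 0 <= dot (A *m un) un.
  by apply: invariant_CLE; rewrite ?unun.
by rewrite bilinE dotC.
Qed.

Lemma invariant_dual : bilin un (A *m invmx Q *m A^T) un <= 0.
Proof.
rewrite bilin_dual; apply: Qcone_self_dual => x qx xun.
by rewrite dot_Q_ydual; case: (invariant_CLE qx xun).
Qed.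

End Necessity.

Lemma invariant_conditions : invariant_set (CL Q un) A -> invariance_conditions.
Proof.
move=> A_inv; have [mu mu0 A_nsd] := invariant_nsd A_inv.
by exists mu; split; [|split; [|split]] => //;
  [exact: invariant_un_A_un | exact: invariant_dual].
Qed.

(* [ydual] lies in [-C_L]; the reverse Cauchy-Schwarz inequality against [C_L]
   then keeps [A x] on the nonnegative side of [un]. *)
Lemma conditions_invariant : invariance_conditions -> invariant_set (CL Q un) A.
Proof.
move=> [mu [mu0 [/nsdE A_nsd [unAun dual]]]] x /CLE [qx xun]; apply/CLE; split.
  by apply: le_trans (A_nsd x) _; apply: mulr_ge0_le0.
rewrite bilin_dual in dual; rewrite -dot_Q_ydual.
have yun : dot ydual un <= 0.
  have : 0 <= dot ydual un * lam_n.
    by rewrite mulrC -Q_un Qform_sym dot_Q_ydual dotC -bilinE.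
  by rewrite nmulr_lge0.
have := Qcone_Qform_le0 qx xun (z := - ydual); rewrite Qform_opp dotNl oppr_ge0.
by rewrite mulmxN dotNr oppr_le0; apply.
Qed.

End Invariance.

End QuadraticCone.

Lemma invariant_CL_negCL (R : rcfType) n (Q : 'M[R]_n) (v : 'cV[R]_n) (A : 'M[R]_n) :
  invariant_set (CL Q v) A <-> invariant_set (negCL Q v) A.
Proof.
split => Ainv x; first by rewrite /negCL -mulmxN; apply: Ainv.
by move=> CLx; have := Ainv (- x); rewrite /negCL mulmxN !opprK; apply.
Qed.

(* The paper's index [n] is [ord_max]. *)
Theorem theorem3p18 (R : rcfType) (n : nat) (Q : 'M[R]_n.+1)
  (lam : 'I_n.+1 -> R) (u : 'I_n.+1 -> 'cV[R]_n.+1) (A : 'M[R]_n.+1) :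
  Q^T = Q ->
  Q \in unitmx ->
  (forall i j : 'I_n.+1, (i <= j)%N -> lam j <= lam i) ->
  (forall i : 'I_n.+1, i != ord_max -> 0 < lam i) ->
  lam ord_max < 0 ->
  (forall i j : 'I_n.+1, (u i)^T *m u j = (i == j)%:R%:M) ->
  (forall i : 'I_n.+1, Q *m u i = lam i *: u i) ->
  let un := u ord_max in
  let conds := exists mu : R, 0 <= mu /\
      nsd (A^T *m Q *m A - mu *: Q) /\
      0 <= bilin un A un /\
      bilin un (A *m invmx Q *m A^T) un <= 0 in
  (invariant_set (CL Q un) A <-> conds) /\ (invariant_set (negCL Q un) A <-> conds).
Proof.
move=> Q_sym Q_unit _ lam_gt0 lam_n_lt0 u_orth Q_u un conds.
have CL_conds : invariant_set (CL Q un) A <-> conds.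
  split; first exact: (invariant_conditions Q_sym lam_gt0 lam_n_lt0 u_orth Q_u Q_unit).
  exact: (conditions_invariant Q_sym lam_gt0 lam_n_lt0 u_orth Q_u Q_unit).
by split=> //; rewrite -invariant_CL_negCL.
Qed.
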